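(* Let $\mathcal{C}$ be an $[n,k,d]_q$ linear code with two $(r_i,\delta_i)_{i\in\{1,2\}}$ localities with respect to the sets $\mathcal{T}_1$, $\mathcal{T}_2=[n]\setminus\mathcal{T}_1$, where $n_i=|\mathcal{T}_i|$, $r_1\le r_2$ and $\delta_1\ge\delta_2\ge2$. Put $\Delta=\lceil n_1/(r_1+\delta_1-1)\rceil(\delta_1-1)$. If $r_1\lceil n_1/(r_1+\delta_1-1)\rceil\le k-1$ and $r_1\lceil(\Delta-1)/(\delta_1-1)\rceil+(\Delta-1)<n_1$, then $$d\le n-k+1-\left\lceil\frac{n_1}{r_1+\delta_1-1}\right\rceil(\delta_1-1)-\left(\left\lceil\frac{k-r_1\lceil n_1/(r_1+\delta_1-1)\rceil}{r_2}\right\rceil-1\right)(\delta_2-1).$$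
   Context: $[n]=\{1,\dots,n\}$. For an $[n,k,d]_q$ linear code with generator matrix columns $\vec g_1,\dots,\vec g_n$, a regenerating set of coordinate $i$ is a (minimal) subset $R\subseteq[n]$ with $i\in R$ such that $\vec g_i$ is an $\mathbb{F}_q$-linear combination of $\{\vec g_j\}_{j\in R\setminus\{i\}}$ and no proper subset of $R\setminus\{i\}$ suffices; $\mathcal{R}_i$ is the set of all regenerating sets of coordinate $i$. The code has two $(r_i,\delta_i)_{i\in\{1,2\}}$ localities if $\mathcal{T}_1\subseteq[n]$, $\mathcal{T}_2=[n]\setminus\mathcal{T}_1$, $r_1\le r_2$, $\delta_1\ge\delta_2\ge2$ are integers, and for $i=1,2$ and each $\iota\in\mathcal{T}_i$ there is $S_\iota\subseteq\mathcal{T}_i$ with $\iota\in S_\iota$, $\delta_i\le|S_\iota|\le r_i+\delta_i-1$, such that for every $E\subseteq S_\iota$ with $|E|=\delta_i-1$ and every $j\in E$, $(S_\iota\setminus E)\cup\{j\}\in\mathcal{R}_j$. *)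

From HB Require Import structures.
From mathcomp Require Import all_boot all_order all_algebra all_field.
Set Implicit Arguments. Unset Strict Implicit. Unset Printing Implicit Defensive.
Import GRing.Theory Num.Theory.
Local Open Scope ring_scope.

(* A linear [n,k,d]_q code over the finite field F (q = #|F|) is given by a
   generator matrix G : 'M[F]_(k, n) of rank k; its columns are g_1..g_n
   (col i G), and its codewords are the u *m G, u : 'rV_k. *)

Definition wt (F : fieldType) (n : nat) (c : 'rV[F]_n) : nat :=
  #|[set j : 'I_n | c 0 j != 0]|.

Definition is_min_dist (F : fieldType) (k n : nat) (G : 'M[F]_(k, n)) (d : nat) : Prop :=
  (exists2 u : 'rV[F]_k, u != 0 & wt (u *m G) = d) /\
  (forall u : 'rV[F]_k, u != 0 -> (d <= wt (u *m G))%N).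

Definition lin_comb (F : fieldType) (k n : nat) (G : 'M[F]_(k, n))
    (i : 'I_n) (A : {set 'I_n}) : Prop :=
  exists c : 'I_n -> F, col i G = \sum_(j in A) c j *: col j G.

Definition regenerating (F : fieldType) (k n : nat) (G : 'M[F]_(k, n))
    (i : 'I_n) (R : {set 'I_n}) : Prop :=
  [/\ i \in R, lin_comb G i (R :\ i) &
      forall B : {set 'I_n}, B \proper (R :\ i) -> ~ lin_comb G i B].

Definition locality (F : fieldType) (k n : nat) (G : 'M[F]_(k, n))
    (T : {set 'I_n}) (r delta : nat) : Prop :=
  forall iota, iota \in T -> exists S : {set 'I_n},
    [/\ S \subset T, iota \in S, (delta <= #|S| <= r + delta - 1)%N &
      forall E : {set 'I_n}, E \subset S -> #|E| = (delta - 1)%N ->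
        forall j, j \in E -> regenerating G j ((S :\: E) :|: [set j])].

Definition two_localities (F : fieldType) (k n : nat) (G : 'M[F]_(k, n))
    (T1 : {set 'I_n}) (r1 r2 d1 d2 : nat) : Prop :=
  [/\ (r1 <= r2)%N, (d2 <= d1)%N, (2 <= d2)%N,
      locality G T1 r1 d1 & locality G (~: T1) r2 d2].

(* Ceiling of a / b for b > 0 (integers). *)
Definition ceilz (a b : int) : int := - ((- a) %/ b)%Z.

(* For a set Y of coordinates let colrank Y be the rank of the columns g_j,
   j in Y.  If colrank Y < k, a nonzero codeword vanishes on Y; enlarging Y one
   column at a time up to rank k - 1 turns this into
   d <= n - k + 1 - (#|Y| - colrank Y), so it suffices to build a Y of rank
   below k with a large excess #|Y| - colrank Y.  Whenever a column g_i lies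
   outside the span of Y, adding the whole locality set S of i raises the rank
   by at most r while the excess grows by at least delta - 1, because any
   delta - 1 elements of S are spanned by the others.  Take
   ceil(n1 / (r1 + delta1 - 1)) such steps inside T1 (if T1 gets spanned
   earlier, Y := T1 already does the job, by the second numerical hypothesis),
   then as many steps with the (r2, delta2) localities as the rank allows. *)
From HB Require Import structures.
From mathcomp Require Import all_boot all_order all_algebra all_field.
From mathcomp Require Import zify.
Import GRing.Theory Num.Theory.
Local Open Scope ring_scope.
Set Implicit Arguments. Unset Strict Implicit. Unset Printing Implicit Defensive.

Lemma exists_card_between (T : finType) (A B : {set T}) m :
  A \subset B -> (#|A| <= m <= #|B|)%N ->
  exists E : {set T}, [/\ A \subset E, E \subset B & #|E| = m].
Proof.
move=> sAB /andP[leAm lemB].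
have : (m - #|A| <= #|B :\: A|)%N by rewrite cardsD (setIidPr sAB); lia.
case/card_geqP=> s [uniq_s size_s sBA].
exists (A :|: [set x in s]); split; first exact: subsetUl.
  rewrite subUset sAB; apply/subsetP=> x; rewrite inE => /sBA.
  by rewrite inE => /andP[].
have disj : [disjoint A & [set x in s]].
  rewrite -setI_eq0; apply/eqP/setP=> x; rewrite !inE.
  by apply/negP=> /andP[xA /sBA]; rewrite inE xA.
rewrite cardsU (disjoint_setI0 disj) cards0 subn0.
by rewrite cardsE (card_uniqP uniq_s) size_s; lia.
Qed.

Lemma wt_vanishing_on (F : fieldType) n (c : 'rV[F]_n) (Y : {set 'I_n}) :
  {in Y, forall j, c 0 j = 0} -> (wt c + #|Y| <= n)%N.
Proof.
move=> cY; rewrite -[n in (_ <= n)%N]card_ord -(cardsC Y) addnC leq_add2l.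
by apply/subset_leq_card/subsetP=> j; rewrite !inE; apply: contra => /cY ->.
Qed.

Lemma ceilz_mul_ge (a b : int) : 0 < b -> a <= ceilz a b * b.
Proof.
move=> b_gt0; have b_neq0 : b != 0 by lia.
have := divz_eq (- a) b; have := modz_ge0 (- a) b_neq0; have := ltz_pmod (- a) b_gt0.
rewrite /ceilz; nia.
Qed.

Lemma ceilz_sub1_mul_lt (a b : int) : 0 < b -> (ceilz a b - 1) * b < a.
Proof.
move=> b_gt0; have b_neq0 : b != 0 by lia.
have := divz_eq (- a) b; have := modz_ge0 (- a) b_neq0; have := ltz_pmod (- a) b_gt0.
rewrite /ceilz; nia.
Qed.

Lemma ceilz_mul_sub1_ge (c b : int) : 0 < b -> c - 1 <= ceilz (c * b - 1) b.
Proof. by move=> b_gt0; have := ceilz_mul_ge (c * b - 1) b_gt0; nia. Qed.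

Lemma exists_nat_ge_ceilz_sub1 (a r : int) : 0 <= r -> 0 < a ->
  exists M : nat, M%:Z * r < a /\ ceilz a r - 1 <= M%:Z.
Proof.
move=> r_ge0 a_gt0; have [r0 | r_gt0] := eqVneq r 0.
  by exists 0%N; rewrite r0 /ceilz divz0 mulr0 oppr0.
have := @ceilz_sub1_mul_lt a r ltac:(lia).
case: (boolP (ceilz a r - 1 < 0)) => [neg | nneg] lt_a.
  by exists 0%N; lia.
by exists `|ceilz a r - 1|%N; nia.
Qed.

Section ColumnRank.

Variables (F : fieldType) (k n : nat) (G : 'M[F]_(k, n)).
Implicit Types (Y Z A : {set 'I_n}) (i j : 'I_n).

(* Columns are stored as row vectors so that the row-space calculus (%MS) applies. *)
Definition colv (j : 'I_n) : 'rV[F]_k := row j G^T.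

Definition colspan (Y : {set 'I_n}) : 'M[F]_k := (\sum_(j in Y) <<colv j>>)%MS.

Definition colrank (Y : {set 'I_n}) : nat := \rank (colspan Y).

Lemma colv_sub_colspan Y j : j \in Y -> (colv j <= colspan Y)%MS.
Proof. by move=> jY; apply: (sumsmx_sup j) => //; rewrite genmxE. Qed.

Lemma colspan_subP m Y (B : 'M_(m, k)) :
  reflect (forall j, j \in Y -> (colv j <= B)%MS) (colspan Y <= B)%MS.
Proof.
apply: (iffP idP) => [sYB j jY | sYB].
  exact: submx_trans (colv_sub_colspan jY) sYB.
by apply/sumsmx_subP=> j jY; rewrite genmxE; apply: sYB.
Qed.

Lemma colspanS Y Z : Y \subset Z -> (colspan Y <= colspan Z)%MS.
Proof. by move/subsetP=> sYZ; apply/colspan_subP=> j /sYZ /colv_sub_colspan. Qed.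

Lemma colrankS Y Z : Y \subset Z -> (colrank Y <= colrank Z)%N.
Proof. by move/colspanS/mxrankS. Qed.

Lemma colrank_leq_card Y : (colrank Y <= #|Y|)%N.
Proof.
rewrite /colrank /colspan -sum1_card.
elim/big_ind2: _ => [|A1 m1 A2 m2 le1 le2|j _]; first by rewrite mxrank0.
  by apply: leq_trans (mxrank_adds_leqif A1 A2).1 (leq_add le1 le2).
by rewrite genmxE rank_leq_row.
Qed.

Lemma colrankU Y Z : (colrank (Y :|: Z) <= colrank Y + colrank Z)%N.
Proof.
apply: leq_trans (mxrank_adds_leqif (colspan Y) (colspan Z)).1.
apply/mxrankS/colspan_subP=> j; rewrite inE => /orP[] /colv_sub_colspan sj.
  exact: submx_trans sj (addsmxSl _ _).
exact: submx_trans sj (addsmxSr _ _).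
Qed.

Lemma colrank_setU1 Y i :
  ~~ (colv i <= colspan Y)%MS -> colrank (i |: Y) = (colrank Y).+1.
Proof.
move=> iY; have sY : Y \subset i |: Y by apply: subsetUr.
apply/eqP; rewrite eqn_leq; apply/andP; split.
  apply: leq_trans (colrankU [set i] Y) _; rewrite addnC -addn1 leq_add2l.
  by apply: leq_trans (colrank_leq_card _) _; rewrite cards1.
rewrite ltn_neqAle colrankS // andbT /colrank (mxrank_leqif_sup (colspanS sY)).2.
apply: contra iY; apply: submx_trans; apply: colv_sub_colspan.
by rewrite !inE eqxx.
Qed.

Lemma lin_comb_colspan i A : lin_comb G i A -> (colv i <= colspan A)%MS.
Proof.
case=> c Hc; rewrite /colv -tr_col Hc.
have -> : (\sum_(j in A) c j *: col j G)^T = \sum_(j in A) c j *: colv j.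
  apply/matrixP=> a b; rewrite !mxE !summxE; apply: eq_bigr => j _.
  by rewrite !mxE.
by apply: summx_sub => j jA; apply/scalemx_sub/colv_sub_colspan.
Qed.

Lemma exists_colv_notin_colspan Y :
  \rank G = k -> (colrank Y < k)%N -> exists i, ~~ (colv i <= colspan Y)%MS.
Proof.
move=> rG ltYk.
case: (pickP [pred i | ~~ (colv i <= colspan Y)%MS]) => [i nYi | spanned].
  by exists i.
suff : (G^T <= colspan Y)%MS by move/mxrankS; rewrite mxrank_tr rG leqNgt ltYk.
by apply/row_subP=> i; apply/negbFE/spanned.
Qed.

Lemma exists_codeword_vanishing Y : (colrank Y < k)%N ->
  exists2 u : 'rV[F]_k, u != 0 & {in Y, forall j, (u *m G) 0 j = 0}.
Proof.
move=> ltYk; set K := kermx (colspan Y)^T.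
have nzK : K != 0 by rewrite -mxrank_eq0 mxrank_ker mxrank_tr subn_eq0 -ltnNge.
have [r Kr] : exists r, row r K != 0.
  apply/existsP; apply: contraNT nzK => /existsPn K0.
  by apply/eqP/row_matrixP=> r; rewrite row0; apply/eqP/negbNE/K0.
exists (row r K) => // j jY.
have -> : (row r K *m G) 0 j = (row r K *m (colv j)^T) 0 0.
  by rewrite !mxE; apply: eq_bigr => l _; rewrite !mxE.
have /submxP[w ->] := colv_sub_colspan jY.
by rewrite trmx_mul mulmxA -row_mul mulmx_ker row0 mul0mx mxE.
Qed.

Lemma colrank_extend Y : \rank G = k -> (colrank Y < k)%N ->
  exists Z, colrank Z = k.-1 /\ (#|Y| + k.-1 <= #|Z| + colrank Y)%N.
Proof.
move=> rG; have [m] := ubnP (k - colrank Y); elim: m Y => // m IH Y lt_m ltYk.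
have [eqYk | neYk] := eqVneq (colrank Y) k.-1; first by exists Y; split; lia.
have [i iY] := exists_colv_notin_colspan rG ltYk.
have iNY : i \notin Y by apply: contra iY; apply: colv_sub_colspan.
have rk_iY := colrank_setU1 iY.
have [||Z [rkZ leZ]] := IH (i |: Y); [lia | lia |].
by exists Z; split=> //; move: leZ; rewrite cardsU1 iNY; lia.
Qed.

Lemma min_dist_colrank_bound d Y : \rank G = k -> is_min_dist G d ->
  (colrank Y < k)%N -> (d + #|Y| + k.-1 <= n + colrank Y)%N.
Proof.
move=> rG [_ min_wt] ltYk; have [Z [rkZ leZ]] := colrank_extend rG ltYk.
have [|u nz_u uZ] := @exists_codeword_vanishing Z; first lia.
by have := min_wt u nz_u; have := wt_vanishing_on uZ; lia.
Qed.

End ColumnRank.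

Section LocalGroup.

Variables (F : fieldType) (k n : nat) (G : 'M[F]_(k, n)) (S : {set 'I_n}) (r delta : nat).
Hypothesis cardS : (delta <= #|S| <= r + delta - 1)%N.
Hypothesis regS : forall E : {set 'I_n}, E \subset S -> #|E| = (delta - 1)%N ->
  forall j, j \in E -> regenerating G j ((S :\: E) :|: [set j]).
Implicit Types (Y E : {set 'I_n}) (i j : 'I_n).

Lemma colv_sub_colspan_local E j : E \subset S -> #|E| = (delta - 1)%N -> j \in E ->
  (colv G j <= colspan G (S :\: E))%MS.
Proof.
move=> sES cardE jE; have [_ lc _] := regS sES cardE jE.
apply: submx_trans (lin_comb_colspan lc) (colspanS _ _).
apply/subsetP=> x; rewrite !inE => /andP[xj /orP[// | /eqP xj']].
by rewrite xj' eqxx in xj.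
Qed.

Lemma colrank_local_gain Y : (delta - 1 <= #|S :\: Y|)%N ->
  (colrank G (Y :|: S) + (delta - 1) <= colrank G Y + #|S :\: Y|)%N.
Proof.
move=> le_dSY.
have [|E [_ sE cardE]] := @exists_card_between _ set0 (S :\: Y) (delta - 1) (sub0set _).
  by rewrite cards0.
have sES : E \subset S := subset_trans sE (subsetDl _ _).
have : (colrank G (Y :|: S) <= colrank G (Y :|: (S :\: E :\: Y)))%N.
  apply/mxrankS/colspan_subP=> j; rewrite inE => /orP[jY | jS].
    by apply: colv_sub_colspan; rewrite inE jY.
  have [jE | jNE] := boolP (j \in E).
    apply: submx_trans (colv_sub_colspan_local sES cardE jE) (colspanS _ _).
    by apply/subsetP=> x; rewrite !inE; case: (x \in Y).
  by apply: colv_sub_colspan; rewrite !inE jNE jS; case: (j \in Y).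
have := colrankU G Y (S :\: E :\: Y); have := colrank_leq_card G (S :\: E :\: Y).
have -> : #|S :\: E :\: Y| = (#|S :\: Y| - #|E|)%N.
  by rewrite setDDl setUC -setDDl cardsD (setIidPr sE).
lia.
Qed.

Lemma colspan_local_cover Y : (#|S :\: Y| < delta - 1)%N ->
  (colspan G S <= colspan G Y)%MS.
Proof.
move=> lt_SY.
have [|E [sE sES cardE]] := @exists_card_between _ (S :\: Y) S (delta - 1) (subsetDl _ _).
  by case/andP: cardS; lia.
have sY : S :\: E \subset Y.
  apply/subsetP=> x; rewrite inE => /andP[xNE xS]; apply: contraNT xNE => xNY.
  by apply: (subsetP sE); rewrite inE xNY xS.
apply/colspan_subP=> j jS; have [jE | jNE] := boolP (j \in E).
  exact: submx_trans (colv_sub_colspan_local sES cardE jE) (colspanS G sY).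
by apply: colv_sub_colspan; apply: (subsetP sY); rewrite inE jNE.
Qed.

Lemma colrank_local_step Y i : i \in S -> ~~ (colv G i <= colspan G Y)%MS ->
  (colrank G (Y :|: S) <= colrank G Y + r)%N /\
  (colrank G (Y :|: S) + (delta - 1) + #|Y| <= colrank G Y + #|Y :|: S|)%N.
Proof.
move=> iS iNY.
have le_dSY : (delta - 1 <= #|S :\: Y|)%N.
  rewrite leqNgt; apply: contra iNY => /colspan_local_cover cover.
  exact: submx_trans (colv_sub_colspan G iS) cover.
have := colrank_local_gain le_dSY; have := subset_leq_card (subsetIl S Y).
have := subset_leq_card (subsetDl S Y); case/andP: cardS.
rewrite cardsU cardsD setIC; lia.
Qed.

End LocalGroup.

Section Greedy.

Variables (F : fieldType) (k n : nat) (G : 'M[F]_(k, n)).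
Implicit Types (T Y : {set 'I_n}) (i : 'I_n).

Lemma locality_step T r delta Y i : locality G T r delta -> i \in T ->
  ~~ (colv G i <= colspan G Y)%MS ->
  exists Z, (colrank G Z <= colrank G Y + r)%N /\
            (colrank G Z + (delta - 1) + #|Y| <= colrank G Y + #|Z|)%N.
Proof.
move=> loc iT iNY; have [S [_ iS cardS regS]] := loc i iT.
by exists (Y :|: S); apply: colrank_local_step cardS regS _ _ iS iNY.
Qed.

Lemma two_localities_step T1 r1 r2 d1 d2 Y i :
  two_localities G T1 r1 r2 d1 d2 -> ~~ (colv G i <= colspan G Y)%MS ->
  exists Z, (colrank G Z <= colrank G Y + r2)%N /\
            (colrank G Z + (d2 - 1) + #|Y| <= colrank G Y + #|Z|)%N.
Proof.
case=> le_r12 le_d21 _ loc1 loc2 iNY; have [iT1 | iNT1] := boolP (i \in T1).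
  by have [Z [rkZ gainZ]] := locality_step loc1 iT1 iNY; exists Z; lia.
by apply: locality_step loc2 _ iNY; rewrite inE.
Qed.

Lemma locality_greedy T r delta t : locality G T r delta ->
  (t.-1 * r + t * (delta - 1) <= #|T|)%N ->
  exists Y, (colrank G Y <= t * r)%N /\ (colrank G Y + t * (delta - 1) <= #|Y|)%N.
Proof.
move=> loc; elim: t => [|t IH] le_tT.
  by exists set0; have := colrank_leq_card G set0; rewrite cards0; lia.
have [|Y [rkY gainY]] := IH; first by case: t {IH} le_tT => //= t; nia.
case: (pickP [pred i | (i \in T) && ~~ (colv G i <= colspan G Y)%MS]).
  move=> i /andP[iT iNY]; have [Z [rkZ gainZ]] := locality_step loc iT iNY.
  by exists Z; nia.
move=> spanned; have rkT : (colrank G T <= colrank G Y)%N.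
  by apply/mxrankS/colspan_subP=> i iT; have := spanned i; rewrite /= iT => /negbFE.
by exists T; nia.
Qed.

Lemma two_localities_greedy T1 r1 r2 d1 d2 Y m : \rank G = k ->
  two_localities G T1 r1 r2 d1 d2 -> (colrank G Y + m * r2 < k)%N ->
  exists Z, (colrank G Z <= colrank G Y + m * r2)%N /\
            (colrank G Z + m * (d2 - 1) + #|Y| <= colrank G Y + #|Z|)%N.
Proof.
move=> rG two; elim: m => [|m IH] lt_mk; first by exists Y; lia.
have [|Z [rkZ gainZ]] := IH; first nia.
have [|i iNZ] := @exists_colv_notin_colspan _ _ _ G Z rG; first nia.
have [W [rkW gainW]] := two_localities_step two iNZ.
by exists W; nia.
Qed.

End Greedy.

Theorem theorem1 (F : finFieldType) (n k d : nat) (G : 'M[F]_(k, n))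
    (T1 : {set 'I_n}) (r1 r2 d1 d2 : nat) :
  \rank G = k ->
  is_min_dist G d ->
  two_localities G T1 r1 r2 d1 d2 ->
  let n1 : int := #|T1|%:Z in
  let c : int := ceilz n1 (r1%:Z + d1%:Z - 1) in
  let Delta : int := c * (d1%:Z - 1) in
  r1%:Z * c <= k%:Z - 1 ->
  r1%:Z * ceilz (Delta - 1) (d1%:Z - 1) + (Delta - 1) < n1 ->
  d%:Z <= n%:Z - k%:Z + 1 - c * (d1%:Z - 1)
          - (ceilz (k%:Z - r1%:Z * c) r2%:Z - 1) * (d2%:Z - 1).
Proof.
move=> rG min_d two n1 c Delta le_ck cover_T1.
have [_ le_d21 ge2_d2 loc1 _] := two.
have le_n1c : n1 <= c * (r1%:Z + d1%:Z - 1) by apply: ceilz_mul_ge; lia.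
have [cn def_c] : exists cn : nat, c = cn%:Z by exists `|c|%N; nia.
have le_cn : cn%:Z - 1 <= ceilz (Delta - 1) (d1%:Z - 1).
  by rewrite /Delta def_c; apply: ceilz_mul_sub1_ge; lia.
have [|Y0 [rkY0 gainY0]] := @locality_greedy _ _ _ G T1 r1 d1 cn loc1.
  by move: cover_T1 le_cn; rewrite /n1 /Delta def_c; case: cn {def_c} => //= cn; nia.
have [//||M [lt_M le_M]] := @exists_nat_ge_ceilz_sub1 (k%:Z - r1%:Z * c) r2%:Z.
  by lia.
have [|Y [rkY gainY]] := @two_localities_greedy _ _ _ G T1 r1 r2 d1 d2 Y0 M rG two.
  by move: lt_M; rewrite def_c; nia.
have lt_Yk : (colrank G Y < k)%N by move: lt_M; rewrite def_c; nia.
have := min_dist_colrank_bound rG min_d lt_Yk.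
by move: le_M; rewrite def_c; nia.
Qed.
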